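(* Let $S\subseteq\mathbb{S}$ be nonempty. Then there exists a closed s-convex set $C\subseteq\mathbb{S}$ with $S\subseteq C$ if and only if there exist $u\in\mathbb{R}^n$ with $\|u\|=1$ and $\alpha>0$ such that $S\subseteq\mathbb{S}\cap\{x\in\mathbb{R}^n\mid\langle x,u\rangle\ge\alpha\}$.
   Context: Standing setting: $n\ge 2$; $\mathbb{R}^n$ carries the usual inner product $\langle\cdot,\cdot\rangle$ and Euclidean norm $\|\cdot\|$; $o$ denotes the zero vector. $\Phi:\mathbb{R}^n\to\mathbb{R}_+:=[0,\infty)$ is a continuous function with $\Phi(tx)=t\Phi(x)$ for all $x\in\mathbb{R}^n$, $t\ge 0$, and $\Phi(x)=0$ iff $x=o$. Set $\mathbb{S}:=\{x\in\mathbb{R}^n\mid \Phi(x)=1\}$ (with the topology induced from $\mathbb{R}^n$), and $\rho:\mathbb{R}^n\to\{o\}\cup\mathbb{S}$, $\rho(x):=x/\Phi(x)$ for $x\neq o$, $\rho(o):=o$. For $x,y\in\mathbb{S}$, $\lambda\in[0,1]$, $\lambda x+_s(1-\lambda)y:=\rho(\lambda x+(1-\lambda)y)$. A nonempty set $S\subseteq\mathbb{S}$ is called s-convex if $\lambda x+_s(1-\lambda)y\in S$ for all $x,y\in S$ and $\lambda\in[0,1]$. *)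

(* R : realType, R^n = 'rV[R]_n with its
   canonical (product = Euclidean) topology. *)
From HB Require Import structures.
From mathcomp Require Import all_boot all_order all_algebra.
From mathcomp Require Import all_classical all_reals all_analysis.
Set Implicit Arguments. Unset Strict Implicit. Unset Printing Implicit Defensive.
Import Order.TTheory GRing.Theory Num.Theory.
Import numFieldNormedType.Exports.
Local Open Scope classical_set_scope.
Local Open Scope ring_scope.

Section Defs.
Context {R : realType} {n : nat}.

Definition dotR (x y : 'rV[R]_n) : R := \sum_(i < n) x ord0 i * y ord0 i.
Definition enorm (x : 'rV[R]_n) : R := Num.sqrt (dotR x x).

Definition gauge_like (Phi : 'rV[R]_n -> R) : Prop :=
  continuous Phi /\
  (forall x, 0 <= Phi x) /\
  (forall (x : 'rV[R]_n) (t : R), 0 <= t -> Phi (t *: x) = t * Phi x) /\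
  (forall x, Phi x = 0 <-> x = 0).

Definition sphere (Phi : 'rV[R]_n -> R) : set 'rV[R]_n := [set x | Phi x = 1].

Definition rho (Phi : 'rV[R]_n -> R) (x : 'rV[R]_n) : 'rV[R]_n :=
  if x == 0 then 0 else (Phi x)^-1 *: x.

Definition scomb (Phi : 'rV[R]_n -> R) (l : R) (x y : 'rV[R]_n) : 'rV[R]_n :=
  rho Phi (l *: x + (1 - l) *: y).

Definition s_convex (Phi : 'rV[R]_n -> R) (S : set 'rV[R]_n) : Prop :=
  S `<=` sphere Phi /\ S !=set0 /\
  (forall x y l, S x -> S y -> 0 <= l -> l <= 1 -> S (scomb Phi l x y)).

Definition closed_in_sphere (Phi : 'rV[R]_n -> R) (C : set 'rV[R]_n) : Prop :=
  C `<=` sphere Phi /\ exists D : set 'rV[R]_n, closed D /\ C = D `&` sphere Phi.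

End Defs.

(* The proof runs through the correspondence between subsets of S and cones:
   - a pointed convex cone cut by S is s-convex (cone_slice_s_convex);
   - conversely the cone spanned by a closed s-convex set C is a closed convex
     cone not containing -c for any c in C, so the nearest-point separation
     from a closed convex cone (cone_separation) separates each point of C from
     the origin (s_convex_separation).
   Forward: C is compact since S is bounded, so the pointwise separations
   combine through a finite subcover into a uniform one
   (compact_uniform_separation).  Backward: S being bounded, a set in the
   half-space lies in the slice by S of the pointed cone
   [b |x| <= <x, u>] for small b > 0, which is closed and s-convex. *)

From HB Require Import structures.
From mathcomp Require Import all_boot all_order all_algebra.
From mathcomp Require Import all_classical all_reals all_analysis.
From mathcomp Require Import ring lra.
Import Order.TTheory GRing.Theory Num.Theory.
Import numFieldNormedType.Exports.
Local Open Scope classical_set_scope.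
Local Open Scope ring_scope.
Set Implicit Arguments. Unset Strict Implicit.

Section InnerProduct.
Context {R : realType} {n : nat}.
Implicit Types (x y z : 'rV[R]_n).

Lemma dotRC x y : dotR x y = dotR y x.
Proof. by apply: eq_bigr => i _; rewrite mulrC. Qed.

Lemma dotRDl x y z : dotR (x + y) z = dotR x z + dotR y z.
Proof. by rewrite /dotR -big_split; apply: eq_bigr => i _; rewrite mxE mulrDl. Qed.

Lemma dotRZl (a : R) x z : dotR (a *: x) z = a * dotR x z.
Proof. by rewrite /dotR mulr_sumr; apply: eq_bigr => i _; rewrite mxE mulrA. Qed.

Lemma dotRDr x y z : dotR z (x + y) = dotR z x + dotR z y.
Proof. by rewrite dotRC dotRDl !(dotRC z). Qed.

Lemma dotRZr (a : R) x z : dotR z (a *: x) = a * dotR z x.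
Proof. by rewrite dotRC dotRZl dotRC. Qed.

Lemma dotRNl x z : dotR (- x) z = - dotR x z.
Proof. by rewrite -scaleN1r dotRZl mulN1r. Qed.

Lemma dotRBl x y z : dotR (x - y) z = dotR x z - dotR y z.
Proof. by rewrite dotRDl dotRNl. Qed.

Lemma dotR0r z : dotR z 0 = 0.
Proof. by rewrite -(scale0r 0) dotRZr mul0r. Qed.

Lemma sqr_coord_le_dot x i : x ord0 i ^+ 2 <= dotR x x.
Proof.
rewrite /dotR (bigD1 i) //= -expr2 lerDl.
by apply: sumr_ge0 => j _; rewrite -expr2 sqr_ge0.
Qed.

Lemma dotR_ge0 x : 0 <= dotR x x.
Proof. by apply: sumr_ge0 => i _; rewrite -expr2 sqr_ge0. Qed.

Lemma dotR_gt0 x : x != 0 -> 0 < dotR x x.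
Proof.
apply: contraNT; rewrite -leNgt => dx0; apply/eqP/rowP => i; rewrite mxE.
apply/eqP; rewrite -sqrf_eq0 eq_le sqr_ge0 andbT.
exact: le_trans (sqr_coord_le_dot x i) dx0.
Qed.

Lemma norm_le_dot x : `|x| <= 1 + dotR x x.
Proof.
have dx0 := dotR_ge0 x.
change (mx_norm x <= 1 + dotR x x); rewrite mx_normrE.
apply: bigmax_le => [|[i j] _]; first lra.
rewrite [i]ord1; have := sqr_coord_le_dot x j.
have [xj1|xj1] := leP `|x ord0 j| 1; first lra.
have : `|x ord0 j| <= `|x ord0 j| ^+ 2 by rewrite expr2 ler_peMr // ltW.
rewrite real_normK ?num_real //; lra.
Qed.

Lemma dotR_expand x y (s : R) :
  dotR (x + s *: y) (x + s *: y) = dotR x x + 2 * s * dotR y x + s ^+ 2 * dotR y y.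
Proof. rewrite dotRDl !dotRDr !dotRZl !dotRZr (dotRC x y); ring. Qed.

Lemma enorm_gt0 x : x != 0 -> 0 < enorm x.
Proof. by move=> x0; rewrite sqrtr_gt0 dotR_gt0. Qed.

Lemma enorm_normalize x : x != 0 -> enorm ((enorm x)^-1 *: x) = 1.
Proof.
move=> x0; have e0 := enorm_gt0 x0.
have xx : dotR x x = enorm x ^+ 2 by rewrite sqr_sqrtr ?dotR_ge0.
rewrite {1}/enorm dotRZl dotRZr xx.
have -> : (enorm x)^-1 * ((enorm x)^-1 * enorm x ^+ 2) = 1 by field; rewrite gt_eqF.
exact: sqrtr1.
Qed.

Lemma continuous_dotR (T : topologicalType) (f g : T -> 'rV[R]_n) :
  continuous f -> continuous g -> continuous (fun t => dotR (f t) (g t)).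
Proof.
move=> fc gc; apply: continuous_big => [|i _ t]; first exact: add_continuous.
have coord (h : T -> 'rV[R]_n) :
    continuous h -> continuous (fun t => h t ord0 i : R).
  by move=> hc s; apply: continuous_comp (hc s) (@coord_continuous R _ _ _ _ (h s)).
exact: continuousM (coord f fc t) (coord g gc t).
Qed.

Lemma continuous_dotRl (u : 'rV[R]_n) : continuous (fun x : 'rV[R]_n => dotR x u).
Proof.
apply: (@continuous_dotR _ (fun x => x) (fun=> u)) => x; first exact: cvg_id.
exact: cst_continuous.
Qed.

End InnerProduct.

Section ConeSeparation.
Context {R : realType} {n : nat}.
Implicit Types (K : set 'rV[R]_n) (k v w : 'rV[R]_n).

Record convex_cone K : Prop := ConvexCone {
  cone0 : K 0;
  coneZ : forall t k, 0 <= t -> K k -> K (t *: k);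
  coneD : forall k1 k2, K k1 -> K k2 -> K (k1 + k2) }.

Definition pointed K : Prop := forall k, K k -> K (- k) -> k = 0.

Lemma nearest_point K w : closed K -> K !=set0 ->
  exists2 p, K p & forall k, K k -> dotR (p - w) (p - w) <= dotR (k - w) (k - w).
Proof.
move=> Kcl [k0 Kk0].
pose f k := dotR (k - w) (k - w).
have fc : continuous f.
  have subw : continuous (fun k => k - w).
    move=> k; apply: (@continuousB _ _ _ id (fun=> w)); first exact: cvg_id.
    exact: cst_continuous.
  exact: (continuous_dotR subw subw).
pose B := K `&` [set k | f k <= f k0].
have B0 : B !=set0 by exists k0; split => /=.
have Bcl : closed B.
  by apply: closedI => //; exact: (preimage_closed (fun x _ => fc x)) (@closed_le _ _).
have Bbd : bounded_set B.
  exists (3 + f k0 + dotR w w); split; first by rewrite num_real.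
  move=> M hM k [_ /= fk]; apply/ltW/le_lt_trans/hM.
  have -> : k = (k - w) + w by rewrite subrK.
  apply: le_trans (ler_normD _ _) _.
  have := norm_le_dot (k - w); have := norm_le_dot w; rewrite -/(f k); lra.
have [p /set_mem [Kp fp] pmin] :=
  compact_EVT_min B0 (bounded_closed_compact Bbd Bcl) (continuous_subspaceT fc).
exists p => // k Kk; have [fk|fk] := leP (f k) (f k0).
  by apply: pmin; apply/mem_set.
exact: le_trans fp (ltW fk).
Qed.

Lemma quadratic_nonneg_slope (a b : R) : 0 <= b ->
  (forall s, 0 < s -> s < 1 -> 0 <= 2 * s * a + s ^+ 2 * b) -> 0 <= a.
Proof.
move=> b0 h; rewrite leNgt; apply/negP => a0.
pose s := - a / (b - 2 * a).
have s0 : 0 < s by rewrite divr_gt0; lra.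
have s1 : s < 1 by rewrite /s ltr_pdivrMr; lra.
have sb : s * b < - 2 * a.
  rewrite /s mulrAC ltr_pdivrMr; last lra.
  have : 0 < - a * (b - 4 * a) by rewrite mulr_gt0 //; lra.
  lra.
have := h s s0 s1; nra.
Qed.

(* Separation from a closed convex cone: the nearest point p of K to w gives
   the functional v = p - w, nonnegative on K and negative at w. *)
Lemma cone_separation K w : closed K -> convex_cone K -> ~ K w ->
  exists v, (forall k, K k -> 0 <= dotR k v) /\ dotR w v < 0.
Proof.
move=> Kcl [K0 KZ KD] Kw.
have [p Kp pmin] := nearest_point w Kcl (ex_intro _ 0 K0).
pose v := p - w.
have vn0 : v != 0 by apply: contraPneq Kw => /eqP; rewrite subr_eq0 => /eqP <-.
(* moving from p along k within K cannot decrease the distance to w *)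
have slope k s : K (p + s *: k) -> 0 <= 2 * s * dotR k v + s ^+ 2 * dotR k k.
  move=> /pmin; rewrite (_ : p + s *: k - w = v + s *: k); last by rewrite /v addrAC.
  rewrite dotR_expand -/v; lra.
have vK k : K k -> 0 <= dotR k v.
  move=> Kk; apply: quadratic_nonneg_slope (dotR_ge0 k) _ => s s0 _.
  by apply/slope/KD/KZ => //; exact: ltW.
have pv : dotR p v <= 0.
  rewrite -oppr_ge0; apply: quadratic_nonneg_slope (dotR_ge0 p) _ => s s0 s1.
  have := slope p (- s); rewrite sqrrN.
  rewrite (_ : p + - s *: p = (1 - s) *: p); last by rewrite scalerBl scale1r scaleNr.
  have -> : 2 * - s * dotR p v = 2 * s * - dotR p v by ring.
  by apply; apply: KZ => //; lra.
exists v; split => //.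
have -> : w = p - v by rewrite /v opprB addrC subrK.
rewrite dotRBl; have := dotR_gt0 vn0; lra.
Qed.

End ConeSeparation.

Section NormCone.
Context {R : realType} {n : nat} (u : 'rV[R]_n) (b : R).
Hypothesis b_gt0 : 0 < b.

Definition norm_cone : set 'rV[R]_n := [set x | b * `|x| <= dotR x u].

Lemma norm_cone_convex : convex_cone norm_cone.
Proof.
split.
- by rewrite /norm_cone /= normr0 mulr0 -(scale0r (0 : 'rV[R]_n)) dotRZl mul0r.
- move=> t x t0; rewrite /norm_cone /= normrZ ger0_norm // dotRZl mulrCA.
  exact: ler_wpM2l.
- move=> x y; rewrite /norm_cone /= dotRDl => xK yK.
  apply: le_trans (ler_wpM2l (ltW b_gt0) (ler_normD x y)) _.
  by rewrite mulrDr lerD.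
Qed.

Lemma norm_cone_pointed : pointed norm_cone.
Proof.
move=> x; rewrite /norm_cone /= normrN dotRNl => xK mxK.
apply/normr0_eq0/eqP; rewrite eq_le normr_ge0 andbT.
by rewrite -(pmulr_rle0 _ b_gt0); lra.
Qed.

Lemma norm_cone_closed : closed norm_cone.
Proof.
have -> : norm_cone = (fun x => dotR x u - b * `|x|) @^-1` [set r | 0 <= r].
  by apply/seteqP; split => x /=; rewrite subr_ge0.
apply: preimage_closed (@closed_ge _ _) => x _.
apply: (@continuousB R R^o _ (fun x => dotR x u) (fun x => b * `|x|));
  first exact: continuous_dotRl.
apply: (@continuousM R _ (fun=> b) (@Num.norm _ 'rV[R]_n)); first exact: cst_continuous.
exact: norm_continuous.
Qed.

End NormCone.

Section CompactSeparation.
Context {R : realType} {n : nat}.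

(* Pointwise separation of a compact set C from the origin by functionals
   nonnegative on C becomes uniform: summing the functionals of a finite
   subcover gives one that is positive on C, hence bounded below by its
   (positive) minimum over C. *)
Lemma compact_uniform_separation (C : set 'rV[R]_n) : compact C -> C !=set0 ->
  (forall c, C c -> exists v, (forall x, C x -> 0 <= dotR x v) /\ 0 < dotR c v) ->
  exists u a, 0 < a /\ forall x, C x -> a <= dotR x u.
Proof.
move=> Ccpt C0 sep.
have /choice [v vP] : forall c, exists v, C c ->
    (forall x, C x -> 0 <= dotR x v) /\ 0 < dotR c v.
  move=> c; have [/sep[v vc]|nCc] := pselect (C c); first by exists v.
  by exists 0.
pose P c := [set x | 0 < dotR x (v c)].
have P_open c : C c -> open (P c).
  move=> _; apply: (@open_comp _ _ (fun x => dotR x (v c))) (@open_gt _ 0).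
  by move=> x _; exact: continuous_dotRl.
have P_cover : C `<=` \bigcup_(c in C) P c.
  by move=> x Cx; exists x => //; exact: (vP x Cx).2.
have := Ccpt; rewrite compact_cover => /(_ _ _ P P_open P_cover) [F FC F_cover].
pose u := \sum_(c <- finmap.enum_fset F) v c.
have u_pos x : C x -> 0 < dotR x u.
  move=> Cx; have [c Fc xc] := F_cover x Cx.
  rewrite /u (big_morph (dotR x) (fun a b => dotRDr a b x) (dotR0r x)).
  rewrite (big_rem c Fc) /=; apply: lt_le_trans xc _; rewrite lerDl big_seq.
  by apply: sumr_ge0 => c' /mem_rem /FC /set_mem Cc'; exact: (vP c' Cc').1 _ Cx.
have [m /set_mem Cm m_min] :=
  compact_EVT_min C0 Ccpt (continuous_subspaceT (@continuous_dotRl _ _ u)).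
by exists u, (dotR m u); split => [|x Cx]; [exact: u_pos | exact/m_min/mem_set].
Qed.

End CompactSeparation.

Section Gauge.
Context {R : realType} {n : nat} (Phi : 'rV[R]_n -> R).
Hypothesis hPhi : gauge_like Phi.
Implicit Types (x y z : 'rV[R]_n) (C D : set 'rV[R]_n).

Let Phi_cont : continuous Phi := hPhi.1.
Let Phi_ge0 : forall x, 0 <= Phi x := hPhi.2.1.
Let PhiZ : forall x (t : R), 0 <= t -> Phi (t *: x) = t * Phi x := hPhi.2.2.1.
Let Phi_eq0 : forall x, Phi x = 0 <-> x = 0 := hPhi.2.2.2.
Let Phi0 : Phi 0 = 0 := (Phi_eq0 0).2 erefl.

Lemma Phi_gt0 x : x != 0 -> 0 < Phi x.
Proof. by move=> x0; rewrite lt_def Phi_ge0 andbT; apply: contra_neq x0 => /Phi_eq0. Qed.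

Lemma sphere_neq0 x : sphere Phi x -> x != 0.
Proof.
move=> x1; apply/eqP => x0; move: x1.
by rewrite /sphere /= x0 Phi0 => /eqP; rewrite eq_sym oner_eq0.
Qed.

Lemma rhoE x : x != 0 -> rho Phi x = (Phi x)^-1 *: x.
Proof. by rewrite /rho => /negbTE ->. Qed.

Lemma sphere_rho x : x != 0 -> sphere Phi (rho Phi x).
Proof.
by move=> x0; rewrite /sphere /= rhoE // PhiZ ?invr_ge0 // mulVf ?gt_eqF ?Phi_gt0.
Qed.

Lemma rho_sphere x : sphere Phi x -> rho Phi x = x.
Proof. by move=> x1; rewrite rhoE ?sphere_neq0 // x1 invr1 scale1r. Qed.

Lemma rhoZ t x : 0 < t -> rho Phi (t *: x) = rho Phi x.
Proof.
move=> t0; have [->|x0] := eqVneq x 0; first by rewrite scaler0.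
rewrite !rhoE ?scaler_eq0 ?negb_or ?gt_eqF // PhiZ ?ltW // scalerA.
by rewrite invfM mulrAC mulVf ?gt_eqF // mul1r.
Qed.

Lemma rho_decomp x : x = Phi x *: rho Phi x.
Proof.
have [->|x0] := eqVneq x 0; first by rewrite /rho eqxx scaler0.
by rewrite rhoE // scalerA mulfV ?gt_eqF ?Phi_gt0 // scale1r.
Qed.

Lemma sphere_closed : closed (sphere Phi).
Proof.
change (closed (Phi @^-1` [set r : R | r = 1])).
by apply: preimage_closed; [move=> x _; exact: Phi_cont | exact: closed_eq].
Qed.

(* The sphere is bounded: Phi attains a positive minimum m on the unit sphere
   of the max-norm, so every point of the Phi-sphere has norm at most 1/m. *)
Lemma sphere_bounded : (0 < n)%N ->
  exists2 M, 0 < M & forall x, sphere Phi x -> `|x| <= M.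
Proof.
move=> n0; pose U := [set x : 'rV[R]_n | `|x| = 1].
have U0 : U !=set0.
  have e0 : const_mx 1 != 0 :> 'rV[R]_n.
    by apply/eqP => /rowP /(_ (Ordinal n0)); rewrite !mxE; apply/eqP; rewrite oner_eq0.
  exists (`|const_mx 1 : 'rV[R]_n|^-1 *: const_mx 1).
  by rewrite /U /= normrZ normfV normr_id mulVf // normr_eq0.
have Ucl : closed U.
  exact: (preimage_closed (fun x _ => @norm_continuous _ _ x)) (@closed_eq _ 1).
have Ubd : bounded_set U.
  by exists 1; split; [rewrite num_real | move=> M M1 x /= ->; exact: ltW].
have [m /set_mem Um mmin] := compact_EVT_min U0 (bounded_closed_compact Ubd Ucl)
  (continuous_subspaceT Phi_cont).
have m0 : m != 0.
  by apply/eqP => m0; move: Um; rewrite /U /= m0 normr0 => /eqP; rewrite eq_sym oner_eq0.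
exists (Phi m)^-1; first by rewrite invr_gt0 Phi_gt0.
move=> x x1; have nx0 : 0 < `|x| by rewrite normr_gt0 sphere_neq0.
have : Phi m <= Phi (`|x|^-1 *: x).
  by apply/mmin/mem_set; rewrite /U /= normrZ normfV normr_id mulVf ?gt_eqF.
rewrite PhiZ ?invr_ge0 // (x1 : Phi x = 1) mulr1 => mx.
by rewrite -(invrK `|x|) lef_pV2 ?posrE ?invr_gt0 ?Phi_gt0.
Qed.

(* Slicing a pointed convex cone by the sphere yields an s-convex set: a convex
   combination of two points of the slice is a nonzero point of the cone, and
   rho moves it back onto the slice along its ray. *)
Lemma cone_slice_s_convex D : convex_cone D -> pointed D ->
  (D `&` sphere Phi) !=set0 -> s_convex Phi (D `&` sphere Phi).
Proof.
move=> [_ DZ DD] Dpt D0; split=> //; split=> // x y l [Dx x1] [Dy y1] l0 l1.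
have Dlx : D (l *: x) by exact: DZ.
have Dly : D ((1 - l) *: y) by apply: DZ Dy; lra.
have z0 : l *: x + (1 - l) *: y != 0.
  rewrite addr_eq0; apply/eqP => lxy.
  have /eqP : l *: x = 0 by apply: Dpt; rewrite // lxy opprK.
  rewrite scaler_eq0 (negbTE (sphere_neq0 x1)) orbF => /eqP l_eq0.
  move: lxy; rewrite l_eq0 scale0r subr0 scale1r => /esym/eqP.
  by rewrite oppr_eq0 (negbTE (sphere_neq0 y1)).
split; last exact: sphere_rho.
by rewrite /scomb rhoE //; apply/DZ/DD; rewrite ?invr_ge0.
Qed.

Definition cone_of C : set 'rV[R]_n := [set z | z = 0 \/ C (rho Phi z)].

(* Normalizing a sum of nonzero vectors is an s-combination of the normalized
   summands, with weights proportional to their Phi-lengths. *)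
Lemma rho_add_scomb x y : x != 0 -> y != 0 ->
  exists2 l, 0 <= l <= 1 & rho Phi (x + y) = scomb Phi l (rho Phi x) (rho Phi y).
Proof.
move=> x0 y0; have px := Phi_gt0 x0; have py := Phi_gt0 y0.
pose l := Phi x / (Phi x + Phi y).
exists l.
  by rewrite divr_ge0 ?ler_pdivrMr ?addr_gt0 //= ?mul1r ?lerDl; lra.
have -> : x + y = (Phi x + Phi y) *: (l *: rho Phi x + (1 - l) *: rho Phi y).
  rewrite {1}(rho_decomp x) {1}(rho_decomp y) scalerDr !scalerA /l.
  by congr (_ *: _ + _ *: _); field; rewrite gt_eqF ?addr_gt0.
by rewrite rhoZ ?addr_gt0.
Qed.

Lemma cone_of_convex C : s_convex Phi C -> convex_cone (cone_of C).
Proof.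
move=> [_ [_ Cconv]]; split; first by left.
  move=> t k t0 [->|Ck]; first by left; rewrite scaler0.
  have [->|tpos] := eqVneq t 0; first by left; rewrite scale0r.
  by right; rewrite rhoZ // lt_def tpos.
move=> k1 k2 [->|C1]; first by rewrite add0r.
move=> [->|C2]; first by rewrite addr0; right.
have [k1_0|k1_0] := eqVneq k1 0; first by rewrite k1_0 add0r; right.
have [k2_0|k2_0] := eqVneq k2 0; first by rewrite k2_0 addr0; right.
have [l /andP[l0 l1] rho_sum] := rho_add_scomb k1_0 k2_0.
by right; rewrite rho_sum; exact: Cconv.
Qed.

(* The cone of an s-convex set does not contain the antipode of any of its
   points: otherwise some s-combination would normalize 0. *)
Lemma cone_of_antipode C c : s_convex Phi C -> C c -> ~ cone_of C (- c).
Proof.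
move=> [Csph [_ Cconv]] Cc; have c0 := sphere_neq0 (Csph c Cc).
have mc0 : - c != 0 by rewrite oppr_eq0.
move=> [/eqP|Cmc]; first by rewrite (negbTE mc0).
have [l /andP[l0 l1] rho_sum] := rho_add_scomb c0 mc0.
rewrite subrr (rho_sphere (Csph c Cc)) in rho_sum.
have := Cconv _ _ l Cc Cmc l0 l1; rewrite -rho_sum /rho eqxx => /Csph.
by move/sphere_neq0; rewrite eqxx.
Qed.

(* The cone of a closed subset of the sphere is closed: off the origin,
   membership is the condition D (Phi y ^-1 *: y), continuous in y. *)
Lemma cone_of_closed C : closed_in_sphere Phi C -> closed (cone_of C).
Proof.
move=> [_ [D [Dcl ->]]]; rewrite -openC openE => z /= zK.
have z0 : z != 0 by apply/eqP => z0; apply: zK; left.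
have Phiz0 : Phi z != 0 by rewrite gt_eqF ?Phi_gt0.
pose g y := (Phi y)^-1 *: y.
have gz : ~ D (g z).
  by move=> Dgz; apply: zK; right; split; [rewrite rhoE | exact: sphere_rho].
have g_cont : {for z, continuous g}.
  apply: continuousZ; last exact: cvg_id.
  by apply: continuousV => //; exact: Phi_cont.
have Ngz : nbhs z (g @^-1` (~` D)).
  by apply: g_cont; apply: open_nbhs_nbhs; split => //; exact: closed_openC.
have NPhi : nbhs z (Phi @^-1` [set r | r != 0]).
  by apply: Phi_cont; apply: open_nbhs_nbhs; split => //; exact: open_neq.
apply: filterS (filterI Ngz NPhi) => y [/= gy Phiy] [y0|[Dy _]].
  by move: Phiy; rewrite y0 Phi0 eqxx.
apply: gy; rewrite /g -rhoE //.
by apply: contra_neq Phiy => ->.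
Qed.

Lemma s_convex_separation C : closed_in_sphere Phi C -> s_convex Phi C ->
  forall c, C c -> exists v, (forall x, C x -> 0 <= dotR x v) /\ 0 < dotR c v.
Proof.
move=> Ccl Cs c Cc.
have [v [vK vc]] :=
  cone_separation (cone_of_closed Ccl) (cone_of_convex Cs) (cone_of_antipode Cs Cc).
exists v; split; last by rewrite -oppr_lt0 -dotRNl.
move=> x Cx; apply: vK; right; rewrite rho_sphere //; exact: Cs.1.
Qed.

(* It is compact, so the
   pointwise separation becomes uniform; then normalize the normal vector. *)
Lemma closed_s_convex_in_halfspace C : (0 < n)%N ->
  closed_in_sphere Phi C -> s_convex Phi C ->
  exists u a, enorm u = 1 /\ 0 < a /\ forall x, C x -> a <= dotR x u.
Proof.
move=> n0 Ccl Cs; have [M M0 sphM] := sphere_bounded n0.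
have Ccpt : compact C.
  apply: bounded_closed_compact.
    exists M; split; first by rewrite num_real.
    by move=> M' MM' x /Cs.1 /sphM xM; exact: le_trans xM (ltW MM').
  by case: Ccl => _ [D [Dcl ->]]; exact: closedI Dcl sphere_closed.
have [u [a [a0 ua]]] :=
  compact_uniform_separation Ccpt Cs.2.1 (s_convex_separation Ccl Cs).
have u0 : u != 0.
  have [c Cc] := Cs.2.1; apply/eqP => u_eq0.
  by have := ua c Cc; rewrite u_eq0 dotR0r; lra.
exists ((enorm u)^-1 *: u), (a / enorm u); split; first exact: enorm_normalize.
split; first by rewrite divr_gt0 ?enorm_gt0.
by move=> x Cx; rewrite dotRZr mulrC ler_pM2l ?invr_gt0 ?enorm_gt0 ?ua.
Qed.

(* Backward direction: a subset of the sphere in a half-space [alpha <= <x, u>]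
   with alpha > 0 lies in the slice by the sphere of the closed pointed cone
   norm_cone u (alpha / M), M a bound on the sphere; that slice is closed and
   s-convex. *)
Lemma halfspace_closed_s_convex_cover S u alpha : (0 < n)%N ->
  S `<=` sphere Phi -> S !=set0 -> 0 < alpha -> (forall x, S x -> alpha <= dotR x u) ->
  exists C, C `<=` sphere Phi /\ closed_in_sphere Phi C /\ s_convex Phi C /\ S `<=` C.
Proof.
move=> n0 Ssph S0 alpha0 Su; have [M M0 sphM] := sphere_bounded n0.
have b0 : 0 < alpha / M by rewrite divr_gt0.
pose C := norm_cone u (alpha / M) `&` sphere Phi.
have SC : S `<=` C.
  move=> x Sx; split; last exact: Ssph.
  apply: le_trans (Su x Sx); rewrite /= mulrAC ler_pdivrMr // ler_pM2l //.
  exact/sphM/Ssph.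
exists C; split; first by move=> x [].
split.
  split; first by move=> x [].
  by exists (norm_cone u (alpha / M)); split => //; exact: norm_cone_closed.
split; last exact: SC.
apply: cone_slice_s_convex; [exact: norm_cone_convex | exact: norm_cone_pointed |].
by have [s Ss] := S0; exists s; exact: SC.
Qed.

End Gauge.

Theorem mainTheorem7 (R : realType) (n : nat) (Phi : 'rV[R]_n -> R)
  (hn : (2 <= n)%N) (hPhi : gauge_like Phi)
  (S : set 'rV[R]_n) (hS : S `<=` sphere Phi) (hS0 : S !=set0) :
  (exists C : set 'rV[R]_n,
      C `<=` sphere Phi /\ closed_in_sphere Phi C /\ s_convex Phi C /\ S `<=` C)
  <->
  (exists (u : 'rV[R]_n) (alpha : R),
      enorm u = 1 /\ 0 < alpha /\
      S `<=` sphere Phi `&` [set x | alpha <= dotR x u]).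
Proof.
have n0 : (0 < n)%N by exact: leq_trans hn.
split.
- move=> [C [_ [Ccl [Cs SC]]]].
  have [u [a [u1 [a0 Cu]]]] := closed_s_convex_in_halfspace hPhi n0 Ccl Cs.
  exists u, a; split; first exact: u1.
  by split=> // x Sx; split; [exact: hS | exact/Cu/SC].
- move=> [u [alpha [_ [alpha0 Su]]]].
  by apply: (halfspace_closed_s_convex_cover (u := u) hPhi n0 hS hS0 alpha0) => x /Su[].
Qed.
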